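(* Let $N^6$ be Calabi–Yau and let $\varphi(t)$, $t\in[0,T)$, be a family of $\mathrm{G}_2$-structures on $M=N\times L^1$ of the ansatz form, with $F=he^{i\theta}$ and $G$ depending on $(r,t)$, each coclosed, and satisfying the Laplacian coflow $\partial_t\psi=-\Delta_d\psi$. Then $h$ is constant (in both $r$ and $t$). Normalizing $h\equiv1$ (by rescaling the Calabi–Yau structure), the functions $\theta$ and $G$ satisfy $$\frac{\partial\theta}{\partial t}=\Delta\theta,\qquad \frac{\partial G}{\partial t}=-9G|\nabla\theta|^2,$$ where $\Delta$ is the rough Laplacian, $\nabla$ the gradient and $|\cdot|$ the norm of $g_7=G^2dr^2+g_6$; explicitly, $\partial_t\theta=\frac{\theta''}{G^2}-\frac{G'\theta'}{G^3}$ and $\partial_tG=-\frac{9(\theta')^2}{G}$.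
   Context: $\mathrm{G}_2$-structure: a 3-form $\varphi$ on a 7-manifold with $(X\lrcorner\varphi)\wedge(X\lrcorner\varphi)\wedge\varphi\ne0$ for $X\ne0$, inducing metric/orientation via $-\frac16(X\lrcorner\varphi)\wedge(Y\lrcorner\varphi)\wedge\varphi=g(X,Y)\mathrm{vol}$; $\psi=*\varphi$; coclosed means $d\psi=0$; $\Delta_d=dd^*+d^*d$ is the Hodge Laplacian of the time-dependent induced metric. Laplacian coflow: $\partial_t\psi=-\Delta_d\psi$. Calabi–Yau threefold $(N^6,g_6,\omega,\Omega)$: $\mathrm{SU}(3)$-structure (metric, Kähler form $\omega$, complex $(3,0)$-form $\Omega$ with $\omega^3/6=\frac i8\Omega\wedge\bar\Omega=\mathrm{vol}_6$; locally $\omega=\frac i2\sum\xi_p\wedge\bar\xi_p$, $\Omega=\xi_1\wedge\xi_2\wedge\xi_3$ for a unitary coframe) with $\omega,\Omega$ parallel. Ansatz: $L^1$ an interval or circle with coordinate $r$; $F=he^{i\theta}$ ($h>0$, $\theta$ real), $G>0$; $\varphi=\mathrm{Re}(F^3\Omega)-Gh^2dr\wedge\omega$, metric $g_7=G^2dr^2+h^2g_6$, $\psi=-G\,dr\wedge\mathrm{Im}(F^3\Omega)-h^4\omega^2/2$. For functions $f,\rho$ of $r$: rough Laplacian $\Delta f=\frac1{Gh^6}\left(\frac{f'h^6}{G}\right)'$ and $\langle\nabla f,\nabla\rho\rangle=f'\rho'/G^2$. $'$ denotes $\partial/\partial r$. *)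

From Stdlib Require Import Reals.
From Coquelicot Require Import Coquelicot.
From mathcomp Require Import all_boot.

Set Implicit Arguments.
Unset Strict Implicit.
Unset Printing Implicit Defensive.

Open Scope R_scope.

(* Pointwise coframe of M = N x L: index 0 is dr; indices 1..6 are
   x1,y1,x2,y2,x3,y3 with xi_p = x_p + i y_p a unitary coframe of g6.
   A (mixed-degree) form is given by its coefficients on the basis
   c_K = c_{k1} /\ ... /\ c_{km} (k1 < ... < km), K : {set 'I_7}, as a
   function of (r, t).  All forms occurring below lie in the subalgebra
   generated by dr and the parallel forms omega, Re Omega, Im Omega with
   coefficients depending on (r,t) only, on which d acts as dr /\ d/dr. *)
Definition form := R -> R -> {set 'I_7} -> R.

Definition idx (l : seq nat) : {set 'I_7} := [set i : 'I_7 | nat_of_ord i \in l].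

Definition bf (l : seq nat) (K : {set 'I_7}) : R := if K == idx l then 1 else 0.

Definition dr_idx : 'I_7 := ord0.

Definition ext_d (A : form) : form := fun r t K =>
  if dr_idx \in K then Derive (fun s => A s t (K :\ dr_idx)) r else 0.

(* sign of c_I /\ c_J = perm_sign I J * c_{I u J} for disjoint I, J *)
Definition perm_sign (I J : {set 'I_7}) : R :=
  (-1) ^ #|[set p : 'I_7 * 'I_7 |
             (p.1 \in I) && (p.2 \in J) && (nat_of_ord p.2 < nat_of_ord p.1)%N]|.

(* metric g7 = G^2 dr^2 + h^2 g6: |dr| = 1/G, |c_j| = 1/h (j >= 1);
   *c_I = perm_sign I I^c * (prod_{I^c} lambda / prod_I lambda) c_{I^c},
   lambda_0 = G, lambda_j = h; orientation dr /\ vol6 (vol6 = omega^3/6). *)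
Definition star_scale (h G : R) (I : {set 'I_7}) : R :=
  (if dr_idx \in I then / G else G) * h ^ (6 - #|I :\ dr_idx|) / h ^ #|I :\ dr_idx|.

Definition hodge (h G : R -> R -> R) (A : form) : form := fun r t K =>
  perm_sign (~: K) K * star_scale (h r t) (G r t) (~: K) * A r t (~: K).

(* codifferential in dimension 7: d* = (-1)^k * d * on k-forms *)
Definition codiff (h G : R -> R -> R) (A : form) : form := fun r t J =>
  (-1) ^ (#|J|.+1) * hodge h G (ext_d (hodge h G A)) r t J.

Definition hodge_lap (h G : R -> R -> R) (A : form) : form := fun r t K =>
  ext_d (codiff h G A) r t K + codiff h G (ext_d A) r t K.

Definition ReOm (K : {set 'I_7}) : R :=
  bf [:: 1; 3; 5]%N K - bf [:: 1; 4; 6]%N K - bf [:: 2; 3; 6]%N K - bf [:: 2; 4; 5]%N K.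
Definition ImOm (K : {set 'I_7}) : R :=
  bf [:: 1; 3; 6]%N K + bf [:: 1; 4; 5]%N K + bf [:: 2; 3; 5]%N K - bf [:: 2; 4; 6]%N K.
Definition drReOm (K : {set 'I_7}) : R :=
  bf [:: 0; 1; 3; 5]%N K - bf [:: 0; 1; 4; 6]%N K - bf [:: 0; 2; 3; 6]%N K - bf [:: 0; 2; 4; 5]%N K.
Definition drImOm (K : {set 'I_7}) : R :=
  bf [:: 0; 1; 3; 6]%N K + bf [:: 0; 1; 4; 5]%N K + bf [:: 0; 2; 3; 5]%N K - bf [:: 0; 2; 4; 6]%N K.
Definition omega2half (K : {set 'I_7}) : R :=
  bf [:: 1; 2; 3; 4]%N K + bf [:: 1; 2; 5; 6]%N K + bf [:: 3; 4; 5; 6]%N K.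

(* psi = - G dr /\ Im(F^3 Omega) - h^4 omega^2/2, F = h e^{i theta},
   Im(F^3 Omega) = h^3 (sin(3 theta) Re Omega + cos(3 theta) Im Omega) *)
Definition psi_ansatz (h th G : R -> R -> R) : form := fun r t K =>
  - G r t * (h r t) ^ 3 *
      (sin (3 * th r t) * drReOm K + cos (3 * th r t) * drImOm K)
  - (h r t) ^ 4 * omega2half K.

Definition in_open_int (a b : Rbar) (x : R) : Prop := Rbar_lt a x /\ Rbar_lt x b.

(* Since
   d = dr /\ d/dr on the ansatz, coclosedness gives d/dr (h^4) = 0 and kills
   d* d psi, so the coflow reads d/dt psi = - d d* psi.  An exact form has no
   component without dr, so the omega^2/2 part of the flow gives d/dt (h^4) = 0;
   with right continuity at t = 0, h is a constant c.  Then d* psi has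
   coefficients c^3 d/dr(sin 3theta) / G, c^3 d/dr(cos 3theta) / G on c_135,
   c_136, and the c_0135, c_0136 parts of the flow combine into
   d/dt (G e^(3 i theta)) = d/dr (d/dr (e^(3 i theta)) / G).  Dividing by
   e^(3 i theta) and separating real and imaginary parts yields the evolution
   equations for G and theta. *)

From Stdlib Require Import Reals Lra.
From Coquelicot Require Import Coquelicot.
From mathcomp Require Import all_boot.
Open Scope R_scope.

Set Implicit Arguments.
Unset Strict Implicit.

Lemma card_ord7 (P : pred nat) : #|[pred i : 'I_7 | P i]| = count P (iota 0 7).
Proof. by rewrite cardE size_filter -enumT -val_enum_ord count_map. Qed.

Lemma card_ord7_pair (P : nat -> nat -> bool) :
  #|[pred p : 'I_7 * 'I_7 | P p.1 p.2]| =
  count (fun q => P q.1 q.2) [seq (x, y) | x <- iota 0 7, y <- iota 0 7].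
Proof.
rewrite cardE size_filter [in LHS]unlock /prod_enum -!val_enum_ord.
have -> : [seq (x, y) | x <- map val (enum 'I_7), y <- map val (enum 'I_7)] =
    map (fun p : 'I_7 * 'I_7 => (val p.1, val p.2))
        [seq (x, y) | x <- enum 'I_7, y <- enum 'I_7].
  by rewrite map_allpairs allpairs_mapl allpairs_mapr.
by rewrite count_map; apply: eq_count => -[x y].
Qed.

Lemma card_idx (l : seq nat) : #|idx l| = count (mem l) (iota 0 7).
Proof. by rewrite -card_ord7; apply: eq_card => i; rewrite inE. Qed.

Lemma perm_sign_idx (l1 l2 : seq nat) : perm_sign (idx l1) (idx l2) =
  (-1) ^ count (fun q => (q.1 \in l1) && (q.2 \in l2) && (q.2 < q.1)%N)
            [seq (x, y) | x <- iota 0 7, y <- iota 0 7].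
Proof.
rewrite /perm_sign -(card_ord7_pair (fun x y => (x \in l1) && (y \in l2) && (y < x)%N)).
by congr (_ ^ _); apply: eq_card => p; rewrite !inE.
Qed.

Lemma idx_eq (l1 l2 : seq nat) :
  (idx l1 == idx l2) = all (fun i => (i \in l1) == (i \in l2)) (iota 0 7).
Proof.
apply/eqP/allP => [E i | E].
  rewrite mem_iota => /andP[_ lt_i7].
  have := congr1 (fun S : {set 'I_7} => Ordinal lt_i7 \in S) E.
  by rewrite /= !inE => ->.
by apply/setP => j; rewrite !inE; apply/eqP/E; rewrite mem_iota ltn_ord.
Qed.

Ltac idx_set := apply/setP => -[[|[|[|[|[|[|[|?]]]]]]] ?]; rewrite !inE.

Lemma star_scale_dr3 (I : {set 'I_7}) (x y : R) :
  dr_idx \in I -> #|I :\ dr_idx| = 3%N -> x <> 0 -> star_scale x y I = / y.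
Proof.
move=> drI cardI x_neq0; rewrite /star_scale drI cardI /Rdiv Rmult_assoc.
by rewrite Rinv_r ?Rmult_1_r //; apply: pow_nonzero.
Qed.

Section AnsatzComponents.
Variables h th G : R -> R -> R.
Local Notation psi := (psi_ansatz h th G).

Ltac psi_component := rewrite /psi_ansatz /drReOm /drImOm /omega2half /bf !idx_eq /=; ring.

Lemma psi_ansatz_1234 r t : psi r t (idx [:: 1; 2; 3; 4]%N) = - h r t ^ 4.
Proof. psi_component. Qed.

Lemma psi_ansatz_0135 r t :
  psi r t (idx [:: 0; 1; 3; 5]%N) = - G r t * h r t ^ 3 * sin (3 * th r t).
Proof. psi_component. Qed.

Lemma psi_ansatz_0136 r t :
  psi r t (idx [:: 0; 1; 3; 6]%N) = - G r t * h r t ^ 3 * cos (3 * th r t).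
Proof. psi_component. Qed.

Lemma hodge_psi_246 r t : h r t <> 0 -> G r t <> 0 ->
  hodge h G psi r t (idx [:: 2; 4; 6]%N) = h r t ^ 3 * sin (3 * th r t).
Proof.
move=> h_neq0 G_neq0; rewrite /hodge.
have -> : ~: idx [:: 2; 4; 6]%N = idx [:: 0; 1; 3; 5]%N by idx_set.
rewrite perm_sign_idx star_scale_dr3 ?psi_ansatz_0135 //; last first.
- by rewrite (_ : _ :\ _ = idx [:: 1; 3; 5]%N) ?card_idx //; idx_set.
- by rewrite inE.
by rewrite /=; field.
Qed.

Lemma hodge_psi_245 r t : h r t <> 0 -> G r t <> 0 ->
  hodge h G psi r t (idx [:: 2; 4; 5]%N) = - h r t ^ 3 * cos (3 * th r t).
Proof.
move=> h_neq0 G_neq0; rewrite /hodge.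
have -> : ~: idx [:: 2; 4; 5]%N = idx [:: 0; 1; 3; 6]%N by idx_set.
rewrite perm_sign_idx star_scale_dr3 ?psi_ansatz_0136 //; last first.
- by rewrite (_ : _ :\ _ = idx [:: 1; 3; 6]%N) ?card_idx //; idx_set.
- by rewrite inE.
by rewrite /=; field.
Qed.

Lemma codiff_psi_135 r t : h r t <> 0 ->
  codiff h G psi r t (idx [:: 1; 3; 5]%N) =
  Derive (fun u => hodge h G psi u t (idx [:: 2; 4; 6]%N)) r / G r t.
Proof.
move=> h_neq0; rewrite /codiff /hodge.
have -> : ~: idx [:: 1; 3; 5]%N = idx [:: 0; 2; 4; 6]%N by idx_set.
rewrite card_idx perm_sign_idx star_scale_dr3 //; last first.
- by rewrite (_ : _ :\ _ = idx [:: 2; 4; 6]%N) ?card_idx //; idx_set.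
- by rewrite inE.
rewrite /ext_d inE /= (_ : _ :\ _ = idx [:: 2; 4; 6]%N); last by idx_set.
by rewrite /Rdiv /=; ring.
Qed.

Lemma codiff_psi_136 r t : h r t <> 0 ->
  codiff h G psi r t (idx [:: 1; 3; 6]%N) =
  - Derive (fun u => hodge h G psi u t (idx [:: 2; 4; 5]%N)) r / G r t.
Proof.
move=> h_neq0; rewrite /codiff /hodge.
have -> : ~: idx [:: 1; 3; 6]%N = idx [:: 0; 2; 4; 5]%N by idx_set.
rewrite card_idx perm_sign_idx star_scale_dr3 //; last first.
- by rewrite (_ : _ :\ _ = idx [:: 2; 4; 5]%N) ?card_idx //; idx_set.
- by rewrite inE.
rewrite /ext_d inE /= (_ : _ :\ _ = idx [:: 2; 4; 5]%N); last by idx_set.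
by rewrite /Rdiv /=; ring.
Qed.

End AnsatzComponents.

Lemma ext_d_locally_0 (A : form) r t K :
  locally r (fun u => forall L, A u t L = 0) -> ext_d A r t K = 0.
Proof.
move=> A0; rewrite /ext_d; case: ifP => // _.
rewrite (Derive_ext_loc _ (fun _ => 0)) ?Derive_const //.
by apply: filter_imp A0 => u; apply.
Qed.

Lemma hodge_lap_closed (h G : R -> R -> R) (A : form) r t K :
  locally r (fun u => forall L, ext_d A u t L = 0) ->
  hodge_lap h G A r t K = ext_d (codiff h G A) r t K.
Proof.
move=> dA0; rewrite /hodge_lap /codiff [hodge _ _ (ext_d (hodge _ _ (ext_d A)))]/hodge.
rewrite (ext_d_locally_0 (A := hodge h G (ext_d A))) ?Rmult_0_r ?Rplus_0_r //.
by apply: filter_imp dA0 => u dA0u L; rewrite /hodge dA0u Rmult_0_r.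
Qed.

Lemma is_derive_0_of_pow (f : R -> R) (n : nat) x :
  ex_derive f x -> f x <> 0 -> Derive (fun s => f s ^ n.+1) x = 0 ->
  is_derive f x 0.
Proof.
move=> df fx_neq0 dfn0.
rewrite (is_derive_unique _ _ _ (is_derive_pow f n.+1 x _ (Derive_correct f x df))) in dfn0.
have /Rmult_integral [/Rmult_integral [|Df0]|] := dfn0.
- by rewrite S_INR; have := pos_INR n; lra.
- by rewrite -Df0; apply: Derive_correct.
- by move/(pow_nonzero _ n fx_neq0).
Qed.

Lemma in_open_int_locally (a b : Rbar) x :
  in_open_int a b x -> locally x (in_open_int a b).
Proof. exact: (open_and _ _ (open_Rbar_gt a) (open_Rbar_lt b)). Qed.

Lemma in_open_int_between (a b : Rbar) x y z :
  in_open_int a b x -> in_open_int a b y -> Rmin x y <= z <= Rmax x y ->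
  in_open_int a b z.
Proof.
move=> [ax xb] [ay yb] z_between.
have a_min : Rbar_lt a (Rmin x y) by rewrite /Rmin; case: Rle_dec.
have max_b : Rbar_lt (Rmax x y) b by rewrite /Rmax; case: Rle_dec.
split; first by apply: (Rbar_lt_le_trans _ _ _ a_min); simpl; lra.
by apply: (Rbar_le_lt_trans _ _ _ _ max_b); simpl; lra.
Qed.

Lemma in_open_int_ex (a b : Rbar) : Rbar_lt a b -> exists x, in_open_int a b x.
Proof.
case: a => [a| |]; case: b => [b| |] //= ab.
- by exists ((a + b) / 2); split => /=; lra.
- by exists (a + 1); split => /=; lra.
- by exists (b - 1); split => /=; lra.
- by exists 0.
Qed.

Lemma is_derive_0_const_open_int (a b : Rbar) (f : R -> R) x y :
  (forall z, in_open_int a b z -> is_derive f z 0) ->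
  in_open_int a b x -> in_open_int a b y -> f x = f y.
Proof.
move=> df0 abx aby.
have abz z : Rmin x y <= z <= Rmax x y -> in_open_int a b z.
  exact: in_open_int_between.
have df z : Rmin x y < z < Rmax x y -> is_derive f z 0.
  by move=> z_between; apply/df0/abz; lra.
have cf z : Rmin x y <= z <= Rmax x y -> continuity_pt f z.
  move=> z_between; apply/continuity_pt_filterlim/ex_derive_continuous.
  by exists 0; apply/df0/abz.
have [c [_ mvt]] := MVT_gen f x y _ df cf.
by move: mvt; rewrite Rmult_0_l; lra.
Qed.

Lemma Rbar_lt_posreal_gap (x : R) (T : Rbar) :
  Rbar_lt x T -> exists e : posreal, Rbar_lt (x + e) T.
Proof.
case: T => [T| |] xT; simpl in xT |- *.
- have gap_pos : 0 < (T - x) / 2 by lra.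
  by exists (mkposreal _ gap_pos) => /=; lra.
- by exists (mkposreal 1 Rlt_0_1).
- by case: xT.
Qed.

Lemma const_at_right (f : R -> R) (x : R) (T : Rbar) c :
  Rbar_lt x T -> filterlim f (at_right x) (locally (f x)) ->
  (forall s, in_open_int x T s -> f s = c) -> f x = c.
Proof.
move=> xT f_cont f_const.
apply: (filterlim_locally_unique (F := at_right x) f _ _ f_cont).
apply: (filterlim_ext_loc (fun _ => c)); last exact: filterlim_const.
have [e xe_T] := Rbar_lt_posreal_gap xT.
exists e => s xs /= x_s; rewrite f_const //; split => //.
apply: (Rbar_le_lt_trans _ _ _ _ xe_T) => /=.
by move/Rabs_lt_between': xs; rewrite /minus /plus /opp /=; lra.
Qed.

Lemma rotation_cancel (S C x y u v : R) : S ^ 2 + C ^ 2 = 1 ->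
  x * S + y * C = u * S + v * C -> x * C + y * - S = u * C + v * - S ->
  x = u /\ y = v.
Proof.
move=> SC1 eqS eqC.
have rotate z w : z * (S ^ 2 + C ^ 2) = S * (z * S + w * C) + C * (z * C + w * - S) /\
                  w * (S ^ 2 + C ^ 2) = C * (z * S + w * C) - S * (z * C + w * - S).
  by split; ring.
have [xE yE] := rotate x y; have [uE vE] := rotate u v.
rewrite SC1 !Rmult_1_r eqS eqC in xE yE; rewrite SC1 !Rmult_1_r in uE vE.
by split; [rewrite xE -uE | rewrite yE -vE].
Qed.

Lemma is_derive_comp3 (f df th : R -> R) (x : R) :
  (forall y, is_derive f y (df y)) -> ex_derive th x ->
  is_derive (fun s => f (3 * th s)) x (3 * Derive th x * df (3 * th x)).
Proof.
move=> df_f dth; apply: (is_derive_comp f (fun s => 3 * th s)); first exact: df_f.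
by auto_derive; [exact: dth | rewrite Rmult_1_l].
Qed.

Lemma Derive_mul_comp3 (f df g th : R -> R) (x : R) :
  (forall y, is_derive f y (df y)) -> ex_derive g x -> ex_derive th x ->
  Derive (fun s => g s * f (3 * th s)) x =
  Derive g x * f (3 * th x) + (3 * g x * Derive th x) * df (3 * th x).
Proof.
move=> df_f dg dth; apply: is_derive_unique.
have := is_derive_mult _ _ x _ _ (Derive_correct _ _ dg) (is_derive_comp3 df_f dth) Rmult_comm.
rewrite /plus /mult /=.
by rewrite (_ : 3 * g x * Derive th x * df (3 * th x) =
               g x * (3 * Derive th x * df (3 * th x))) //; ring.
Qed.

Lemma Derive_Derive_comp3_div (f df th G : R -> R) (x : R) :
  (forall y, is_derive f y (df y)) -> (forall y, is_derive df y (- f y)) ->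
  locally x (ex_derive th) -> ex_derive (Derive th) x -> ex_derive G x -> G x <> 0 ->
  Derive (fun y => Derive (fun z => f (3 * th z)) y / G y) x =
  (- 9 * Derive th x ^ 2 / G x) * f (3 * th x)
  + (3 * Derive (Derive th) x / G x - 3 * Derive th x * Derive G x / G x ^ 2)
    * df (3 * th x).
Proof.
move=> df_f ddf_f dth d2th dG Gx_neq0.
rewrite (Derive_ext_loc _ (fun y => 3 * Derive th y * df (3 * th y) / G y)); last first.
  apply: filter_imp dth => y dthy.
  by rewrite (is_derive_unique _ _ _ (is_derive_comp3 df_f dthy)).
have d3th : is_derive (fun y => 3 * Derive th y) x (3 * Derive (Derive th) x).
  by auto_derive; [exact: d2th | rewrite Rmult_1_l].
have := is_derive_mult _ _ x _ _ d3th
  (is_derive_comp3 ddf_f (locally_singleton _ _ dth)) Rmult_comm.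
move/(is_derive_div _ _ x _ _)/(_ (Derive_correct _ _ dG) Gx_neq0) => dq.
rewrite (is_derive_unique _ _ _ dq) /plus /mult /=.
by field.
Qed.

Section Coflow.
Variables (a b T : Rbar) (h th G : R -> R -> R).
Local Notation space := (in_open_int a b).
Local Notation time := (in_open_int 0 T).
Local Notation psi := (psi_ansatz h th G).

Hypothesis T_pos : Rbar_lt 0 T.
Hypothesis ansatz_pos : forall r t, space r -> time t \/ t = 0 -> 0 < h r t /\ 0 < G r t.
Hypothesis smooth_r : forall r t (n : nat), space r -> time t \/ t = 0 ->
  ex_derive_n (fun s => h s t) n r /\ ex_derive_n (fun s => th s t) n r /\
  ex_derive_n (fun s => G s t) n r.
Hypothesis derivable_t : forall r t, space r -> time t ->
  ex_derive (fun s => h r s) t /\ ex_derive (fun s => th r s) t /\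
  ex_derive (fun s => G r s) t.
Hypothesis h_right_cont : forall r, space r ->
  filterlim (fun s => h r s) (at_right 0) (locally (h r 0)).
Hypothesis coclosed : forall r t K, space r -> time t \/ t = 0 -> ext_d psi r t K = 0.
Hypothesis coflow : forall r t K, space r -> time t ->
  Derive (fun s => psi r s K) t = - hodge_lap h G psi r t K.

Lemma h_derive_r_0 r t : space r -> time t \/ t = 0 -> is_derive (fun s => h s t) r 0.
Proof.
move=> r_in t_in; have [h_pos _] := ansatz_pos r_in t_in.
have [dh _] := smooth_r 1 r_in t_in.
apply: (@is_derive_0_of_pow _ 3) => //; first lra.
have := coclosed (idx [:: 0; 1; 2; 3; 4]%N) r_in t_in.
rewrite /ext_d inE (_ : _ :\ _ = idx [:: 1; 2; 3; 4]%N); last by idx_set.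
rewrite (Derive_ext _ (fun s => - h s t ^ 4)) => [|s]; last exact: psi_ansatz_1234.
by rewrite Derive_opp => /Ropp_eq_0_compat; rewrite Ropp_involutive.
Qed.

Lemma h_derive_t_0 r t : space r -> time t -> is_derive (fun s => h r s) t 0.
Proof.
move=> r_in t_in; have [h_pos _] := ansatz_pos r_in (or_introl t_in).
have [dh _] := derivable_t r_in t_in.
apply: (@is_derive_0_of_pow _ 3) => //; first lra.
have := coflow (idx [:: 1; 2; 3; 4]%N) r_in t_in.
rewrite hodge_lap_closed; last first.
  apply: filter_imp (in_open_int_locally r_in) => u u_in L.
  by apply: coclosed => //; left.
rewrite /ext_d inE /= Ropp_0.
rewrite (Derive_ext _ (fun s => - h r s ^ 4)) => [|s]; last exact: psi_ansatz_1234.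
by rewrite Derive_opp => /Ropp_eq_0_compat; rewrite Ropp_involutive.
Qed.

Lemma h_eq_h0 r t r0 : space r -> time t \/ t = 0 -> space r0 -> h r t = h r0 0.
Proof.
move=> r_in t_in r0_in.
have -> : h r t = h r 0.
  case: t_in => [t_in | -> //]; symmetry.
  apply: (const_at_right T_pos (h_right_cont r_in)) => s s_in.
  by apply: (is_derive_0_const_open_int _ s_in t_in) => z; apply: h_derive_t_0.
apply: (is_derive_0_const_open_int (f := fun s => h s 0) _ r_in r0_in) => u u_in.
by apply: h_derive_r_0 => //; right.
Qed.

Lemma h_const r t r' t' : space r -> time t \/ t = 0 ->
  space r' -> time t' \/ t' = 0 -> h r t = h r' t'.
Proof.
move=> r_in t_in r'_in t'_in.
by rewrite (h_eq_h0 r_in t_in r_in) (h_eq_h0 r'_in t'_in r_in).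
Qed.

Lemma codiff_psi_sin u t : space u -> time t ->
  codiff h G psi u t (idx [:: 1; 3; 5]%N) =
  h u t ^ 3 * Derive (fun v => sin (3 * th v t)) u / G u t.
Proof.
move=> u_in t_in; have [h_pos _] := ansatz_pos u_in (or_introl t_in).
rewrite codiff_psi_135; last lra.
rewrite (Derive_ext_loc _ (fun v => h u t ^ 3 * sin (3 * th v t))) ?Derive_scal //.
apply: filter_imp (in_open_int_locally u_in) => v v_in.
have [hv_pos Gv_pos] := ansatz_pos v_in (or_introl t_in).
rewrite hodge_psi_246; try lra.
by rewrite (h_const v_in (or_introl t_in) u_in (or_introl t_in)).
Qed.

Lemma codiff_psi_cos u t : space u -> time t ->
  codiff h G psi u t (idx [:: 1; 3; 6]%N) =
  h u t ^ 3 * Derive (fun v => cos (3 * th v t)) u / G u t.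
Proof.
move=> u_in t_in; have [h_pos _] := ansatz_pos u_in (or_introl t_in).
rewrite codiff_psi_136; last lra.
rewrite (Derive_ext_loc _ (fun v => - h u t ^ 3 * cos (3 * th v t))) ?Derive_scal.
  by rewrite /Rdiv; ring.
apply: filter_imp (in_open_int_locally u_in) => v v_in.
have [hv_pos Gv_pos] := ansatz_pos v_in (or_introl t_in).
rewrite hodge_psi_245; try lra.
by rewrite (h_const v_in (or_introl t_in) u_in (or_introl t_in)).
Qed.

Lemma coflow_component (f : R -> R) (K J : {set 'I_7}) r t : space r -> time t ->
  dr_idx \in K -> K :\ dr_idx = J ->
  (forall r t, psi r t K = - G r t * h r t ^ 3 * f (3 * th r t)) ->
  (forall u, space u ->
     codiff h G psi u t J = h u t ^ 3 * Derive (fun v => f (3 * th v t)) u / G u t) ->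
  Derive (fun s => G r s * f (3 * th r s)) t =
  Derive (fun u => Derive (fun v => f (3 * th v t)) u / G u t) r.
Proof.
move=> r_in t_in drK KJ psiK codiffJ.
have [h_pos _] := ansatz_pos r_in (or_introl t_in).
have c3_pos : 0 < h r t ^ 3 by apply: pow_lt.
have := coflow K r_in t_in.
rewrite hodge_lap_closed; last first.
  apply: filter_imp (in_open_int_locally r_in) => u u_in L.
  by apply: coclosed => //; left.
rewrite /ext_d drK KJ.
rewrite (Derive_ext_loc _ (fun s => - h r t ^ 3 * (G r s * f (3 * th r s)))); last first.
  apply: filter_imp (in_open_int_locally t_in) => s s_in.
  by rewrite psiK (h_const r_in (or_introl s_in) r_in (or_introl t_in)); ring.
rewrite (Derive_ext_loc (fun u => codiff h G psi u t J)
  (fun u => h r t ^ 3 * (Derive (fun v => f (3 * th v t)) u / G u t))); last first.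
  apply: filter_imp (in_open_int_locally r_in) => u u_in.
  rewrite codiffJ // (h_const u_in (or_introl t_in) r_in (or_introl t_in)).
  by rewrite /Rdiv; ring.
(* Both sides carry the factor -h^3, a nonzero constant by [h_const]. *)
rewrite !Derive_scal => component_eq.
by apply: (Rmult_eq_reg_l (- h r t ^ 3)); [rewrite component_eq; ring | lra].
Qed.

Lemma theta_G_evolution r t : space r -> time t ->
  Derive (fun s => th r s) t =
    Derive (Derive (fun s => th s t)) r / G r t ^ 2
    - Derive (fun s => G s t) r * Derive (fun s => th s t) r / G r t ^ 3 /\
  Derive (fun s => G r s) t = - 9 * Derive (fun s => th s t) r ^ 2 / G r t.
Proof.
move=> r_in t_in; have [_ G_pos] := ansatz_pos r_in (or_introl t_in).
have [_ [dth_t dG_t]] := derivable_t r_in t_in.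
have dG_r : ex_derive (fun s : R => G s t) r.
  by have [_ [_ dG]] := smooth_r 1 r_in (or_introl t_in).
have d2th_r : ex_derive (Derive (fun s : R => th s t)) r.
  by have [_ [d2th _]] := smooth_r 2 r_in (or_introl t_in).
have dth_near : locally r (ex_derive (fun s : R => th s t)).
  apply: filter_imp (in_open_int_locally r_in) => u u_in.
  by have [_ []] := smooth_r 1 u_in (or_introl t_in).
have d_sin y : is_derive sin y (cos y) by auto_derive; rewrite ?Rmult_1_l.
have d_cos y : is_derive cos y (- sin y) by auto_derive; rewrite ?Rmult_1_l.
have d_msin y : is_derive (fun z => - sin z) y (- cos y) by auto_derive; rewrite ?Rmult_1_l.
have G_neq0 : G r t <> 0 by lra.
have sin_eq : Derive (fun s => G r s * sin (3 * th r s)) t =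
              Derive (fun u => Derive (fun v => sin (3 * th v t)) u / G u t) r.
  apply: (coflow_component (K := idx [:: 0; 1; 3; 5]%N) (J := idx [:: 1; 3; 5]%N) r_in t_in).
  - by rewrite inE.
  - by idx_set.
  - exact: psi_ansatz_0135.
  - by move=> u u_in; apply: codiff_psi_sin.
have cos_eq : Derive (fun s => G r s * cos (3 * th r s)) t =
              Derive (fun u => Derive (fun v => cos (3 * th v t)) u / G u t) r.
  apply: (coflow_component (K := idx [:: 0; 1; 3; 6]%N) (J := idx [:: 1; 3; 6]%N) r_in t_in).
  - by rewrite inE.
  - by idx_set.
  - exact: psi_ansatz_0136.
  - by move=> u u_in; apply: codiff_psi_cos.
rewrite (Derive_mul_comp3 d_sin dG_t dth_t)
        (Derive_Derive_comp3_div d_sin d_cos dth_near d2th_r dG_r G_neq0) in sin_eq.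
rewrite (Derive_mul_comp3 d_cos dG_t dth_t)
        (Derive_Derive_comp3_div d_cos d_msin dth_near d2th_r dG_r G_neq0) in cos_eq.
have sin_cos_1 : sin (3 * th r t) ^ 2 + cos (3 * th r t) ^ 2 = 1.
  by rewrite -!Rsqr_pow2 sin2_cos2.
(* [sin_eq] and [cos_eq] are the imaginary and real parts of
   d/dt (G e^(3 i theta)) = d/dr (d/dr (e^(3 i theta)) / G). *)
have [G_t_eq th_t_eq] := rotation_cancel sin_cos_1 sin_eq cos_eq.
split; last exact: G_t_eq.
apply: (Rmult_eq_reg_l (3 * G r t)); last lra.
by rewrite th_t_eq; field.
Qed.

End Coflow.

Theorem mainTheorem6 (a b T : Rbar) (h th G : R -> R -> R) :
  Rbar_lt a b -> Rbar_lt 0 T ->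
  (forall r t, in_open_int a b r -> in_open_int 0 T t \/ t = 0 -> 0 < h r t /\ 0 < G r t) ->
  (forall r t (n : nat), in_open_int a b r -> in_open_int 0 T t \/ t = 0 ->
     ex_derive_n (fun s => h s t) n r /\ ex_derive_n (fun s => th s t) n r /\
     ex_derive_n (fun s => G s t) n r) ->
  (forall r t, in_open_int a b r -> in_open_int 0 T t ->
     ex_derive (fun s => h r s) t /\ ex_derive (fun s => th r s) t /\
     ex_derive (fun s => G r s) t) ->
  (forall r, in_open_int a b r ->
     filterlim (fun s => h r s) (at_right 0) (locally (h r 0)) /\
     filterlim (fun s => th r s) (at_right 0) (locally (th r 0)) /\
     filterlim (fun s => G r s) (at_right 0) (locally (G r 0))) ->
  (forall r t K, in_open_int a b r -> in_open_int 0 T t \/ t = 0 ->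
     ext_d (psi_ansatz h th G) r t K = 0) ->
  (forall r t K, in_open_int a b r -> in_open_int 0 T t ->
     Derive (fun s => psi_ansatz h th G r s K) t =
       - hodge_lap h G (psi_ansatz h th G) r t K) ->
  (exists c : R, forall r t, in_open_int a b r -> in_open_int 0 T t \/ t = 0 -> h r t = c) /\
  (forall r t, in_open_int a b r -> in_open_int 0 T t ->
     Derive (fun s => th r s) t =
       Derive_n (fun s => th s t) 2 r / (G r t) ^ 2
       - Derive (fun s => G s t) r * Derive (fun s => th s t) r / (G r t) ^ 3 /\
     Derive (fun s => G r s) t = - 9 * (Derive (fun s => th s t) r) ^ 2 / G r t).
Proof.
move=> ab T_pos pos smooth deriv_t cont coclosed coflow.
have h_right_cont r : in_open_int a b r ->
    filterlim (fun s => h r s) (at_right 0) (locally (h r 0)).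
  by move=> /cont[].
have [r0 r0_in] := in_open_int_ex ab.
split.
- exists (h r0 0) => r t r_in t_in.
  exact: (h_const T_pos pos smooth deriv_t h_right_cont coclosed coflow
                  r_in t_in r0_in (or_intror erefl)).
- move=> r t r_in t_in.
  exact: (theta_G_evolution T_pos pos smooth deriv_t h_right_cont coclosed coflow r_in t_in).
Qed.
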